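(* Suppose every request of the input $\sigma$ is a triggering request with respect to ALG run on $\sigma$. Let $t$ be any time and let $R$ be the set of indices of requests that have arrived by time $t$ and are pending in ALG at time $t$. For $k\in R$ let $x_k$ denote the position of $e_k$ in ALG's list at time $t$. Then the positions $x_k$, $k\in R$, are pairwise distinct; writing $R=\{k_1,\dots,k_d\}$ with $1\le x_{k_1}<x_{k_2}<\dots<x_{k_d}\le n$, we have: (1) $q_{k_\ell}\le q_{k_{\ell+1}}$ for every $\ell\in[d-1]$, i.e. ALG serves $r_{k_\ell}$ no later than $r_{k_{\ell+1}}$; (2) $2x_{k_\ell}\le x_{k_{\ell+1}}$ for every $\ell\in[d-1]$; (3) $d\le\log_2 n+1$.
   Context: List Update with Time Windows. A set $\mathbb{E}$ of $n$ elements is kept in an ordered list (position $1$ is the head). An input $\sigma$ is a sequence of requests $r_1,\dots,r_m$; request $r_k$ specifies an element $e_k\in\mathbb{E}$, an arrival time $a_k$ and a deadline $q_k\ge a_k$. An algorithm may perform an access up to position $i$ at cost $i$, serving every pending request whose element currently lies in positions $1,\dots,i$, and may swap adjacent elements at cost $1$; actions are instantaneous; every request must be served within $[a_k,q_k]$. Algorithm ALG: whenever the current time equals the deadline of at least one pending request, let the triggering element be the element at the largest current position among those elements having a pending request whose deadline is the current time, and let $i$ be its position. ALG accesses the first $\min(2i-1,n)$ positions and then moves the triggering element to the front by $i-1$ adjacent swaps. At each such event the triggering request is one (arbitrarily fixed) pending request for the triggering element whose deadline is the current time. A request of $\sigma$ is a triggering request if it is the triggering request of some event of ALG on $\sigma$.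 *)

From HB Require Import structures.
From mathcomp Require Import all_boot all_order all_algebra.
Set Implicit Arguments. Unset Strict Implicit. Unset Printing Implicit Defensive.
Import Order.TTheory GRing.Theory Num.Theory.
Local Open Scope ring_scope.

Section ALG.
(* Times are elements of an ordered field R (e.g. the reals).
   Elements are 'I_n; requests are indexed by 'I_m:
   request k asks for element e k, arrives at a k, has deadline q k. *)
Variables (R : realFieldType) (n m : nat).
Variables (e : 'I_m -> 'I_n) (a q : 'I_m -> R).
(* initial list, head first *)
Variable L0 : seq 'I_n.

Definition pos (x : 'I_n) (L : seq 'I_n) : nat := (index x L).+1.

(* state of ALG: current list and set of already served requests *)
Definition state := (seq 'I_n * {set 'I_m})%type.

Definition pending (st : state) (tau : R) : {set 'I_m} :=
  [set k | (a k <= tau) && (k \notin st.2)].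

Definition due (st : state) (tau : R) : {set 'I_m} :=
  [set k in pending st tau | q k == tau].

Definition trig_elt (st : state) (tau : R) : option 'I_n :=
  match [pick k in due st tau] with
  | None => None
  | Some k0 => Some (e [arg max_(k > k0 in due st tau) pos (e k) st.1]%N)
  end.

Definition cands (st : state) (tau : R) : {set 'I_m} :=
  match trig_elt st tau with
  | None => set0
  | Some x => [set k in due st tau | e k == x]
  end.

Definition step (st : state) (tau : R) : state :=
  match trig_elt st tau with
  | None => st
  | Some x =>
      let i := pos x st.1 in
      (x :: rem x st.1,
       st.2 :|: [set k in pending st tau | (pos (e k) st.1 <= minn (2 * i - 1) n)%N])
  end.

(* the only times at which ALG may act: the deadlines, sorted increasingly *)
Definition deadlines : seq R :=
  sort (fun x y : R => x <= y) (undup [seq q k | k <- enum 'I_m]).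

Definition run_upto (p : pred R) : state :=
  foldl step (L0, set0) [seq tau <- deadlines | p tau].

Definition state_before (tau : R) : state := run_upto (fun s => s < tau).

(* An event of ALG happens at tau iff tau is a deadline and the candidate set
   (equivalently the set of due pending requests) is nonempty.
   A choice rule c picks the (arbitrarily fixed) triggering request of each event. *)
Definition valid_choice (c : R -> option 'I_m) : Prop :=
  forall tau, tau \in deadlines -> cands (state_before tau) tau != set0 ->
    exists2 k, c tau = Some k & k \in cands (state_before tau) tau.

Definition is_triggering (c : R -> option 'I_m) (k : 'I_m) : Prop :=
  exists tau, [/\ tau \in deadlines, cands (state_before tau) tau != set0
                & c tau = Some k].

(* state of ALG at time t: if [after] is true, after ALG's action at time t,
   otherwise just before it *)
Definition state_at (after : bool) (t : R) : state :=
  run_upto (fun s => (s < t) || (after && (s == t))).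

Definition pending_at (after : bool) (t : R) : {set 'I_m} :=
  pending (state_at after t) t.

End ALG.

(* If every request is triggering, request [k] triggers the event at its own
   deadline [q k]; hence deadlines are pairwise distinct and each request is
   served at the latest at its deadline.  Take two requests [k], [j] pending
   at time [t] with [q k < q j].  Between [t] and [q k] ALG only performs
   move-to-front on elements in front of [e k] and [e j] (anything it passes
   over inside its access window gets served), so both keep their positions
   [x_k], [x_j].  At the event at [q k] the triggering element is [e k], yet
   [j] survives: [e j] lies outside the window [1, 2 x_k - 1], i.e.
   [2 x_k <= x_j].  The claims then follow from a purely combinatorial fact:
   a finite set with distinct deadlines in which an earlier deadline forces a
   position at most half as large is totally ordered by position, increasing
   in deadline, doubling in position, hence of size at most [log2 n + 1]. *)
From Pilot Require Import Defs.
From mathcomp Require Import all_boot all_order all_algebra.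
From mathcomp Require Import zify.
Import Order.TTheory GRing.Theory Num.Theory.
Set Implicit Arguments.
Unset Strict Implicit.
Unset Printing Implicit Defensive.
Local Open Scope ring_scope.

Lemma rem_cat_notin (T : eqType) (y : T) (L1 L2 : seq T) :
  y \notin L1 -> rem y (L1 ++ y :: L2) = L1 ++ L2.
Proof.
elim: L1 => [|z L1 IH] /=; first by rewrite eqxx.
by rewrite inE negb_or => /andP[ne nin]; rewrite eq_sym (negbTE ne) IH.
Qed.

Lemma index_move_to_front (T : eqType) (L : seq T) (y z : T) :
  uniq L -> y \in L -> (index y L < index z L)%N ->
  index z (y :: rem y L) = index z L.
Proof.
move=> uL yL; case: (splitPr yL) uL => L1 L2 uL.
have yL1 : y \notin L1.
  by move: uL; rewrite cat_uniq /= => /and3P[_ /norP[]].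
move=> lt_yz; have yz : y != z by apply: contraTneq lt_yz => <-; rewrite ltnn.
move: lt_yz; rewrite rem_cat_notin // /= (negbTE yz) !index_cat (negbTE yL1) /=.
rewrite eqxx addn0 (negbTE yz).
case: ifP => zL1 /= lt_yz; last by rewrite addnS.
by rewrite -index_mem in zL1; lia.
Qed.

Lemma outside_window (i j n : nat) :
  (j <= n)%N -> ~~ (j <= minn (2 * i - 1) n)%N -> (2 * i <= j)%N.
Proof. by rewrite leq_min negb_and => jn /orP[]; lia. Qed.

(* In a sorted sequence a downward-closed predicate [p1] selects a prefix, so
   filtering by a weaker predicate [p2] splits into the [p1]-part followed by
   the rest. *)
Lemma filter_prefix_split d (T : porderType d) (p1 p2 : pred T) (s : seq T) :
  sorted <=%O s -> (forall x, p1 x -> p2 x) ->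
  (forall x y, p1 y -> (x <= y)%O -> p1 x) ->
  filter p2 s = filter p1 s ++ filter (fun x => p2 x && ~~ p1 x) s.
Proof.
move=> + p12 p1_down; elim: s => [|x s IH] //= xs_sorted.
have s_sorted : sorted <=%O s by exact: path_sorted xs_sorted.
case: (boolP (p1 x)) => p1x /=; first by rewrite (p12 _ p1x) IH.
have not_p1 : {in s, forall y, ~~ p1 y}.
  move=> y ys; apply: contra p1x => /p1_down; apply.
  by move/allP: (order_path_min le_trans xs_sorted); apply.
have -> : filter p1 s = [::].
  by apply/eqP; rewrite -[_ == _]negbK -has_filter; apply/hasPn.
have -> : [seq y <- s | p2 y & ~~ p1 y] = [seq y <- s | p2 y].
  by apply: eq_in_filter => y /not_p1 ->; rewrite andbT.
by rewrite andbT.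
Qed.

Lemma doubling_path_last (u : nat) (s : seq nat) :
  path (fun v w => 2 * v <= w)%N u s -> (2 ^ size s * u <= last u s)%N.
Proof.
elim: s u => [|v s IH] u /=; first by rewrite mul1n.
move=> /andP[uv /IH]; rewrite expnS; nia.
Qed.

Lemma doubling_chain_size (n : nat) (s : seq nat) :
  sorted (fun v w => 2 * v <= w)%N s -> all (fun v => 0 < v <= n)%N s ->
  (size s <= trunc_log 2 n + 1)%N.
Proof.
case: s => [//|u s] /doubling_path_last last_ge /allP bounds.
have /andP[u_gt0 _] := bounds u (mem_head u s).
have /andP[_ last_le] := bounds _ (mem_last u s).
have : (2 ^ size s <= n)%N.
  by apply: leq_trans last_le; apply: leq_trans last_ge; exact: leq_pmulr.
by move/(trunc_log_max (isT : (1 < 2)%N)); rewrite addn1.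
Qed.

Section DoublingChain.
Variables (d : Order.disp_t) (R : orderType d) (T : finType) (n : nat).
Variables (S : {set T}) (x : T -> nat) (q : T -> R).
Hypothesis q_inj : {in S &, injective q}.
Hypothesis x_range : {in S, forall k, 0 < x k <= n}%N.
Hypothesis doubling : {in S &, forall k j, (q k < q j)%O -> 2 * x k <= x j}%N.

Let ks : seq T := sort (fun k j => x k <= x j)%N (enum S).

Lemma ks_in_S : all (mem S) ks.
Proof. by apply/allP => k; rewrite mem_sort mem_enum. Qed.

Lemma chain_x_inj : {in S &, injective x}.
Proof.
move=> k j kS jS xkj; apply/eqP; apply: contraT => neq_kj.
have /andP[xk_gt0 _] := x_range kS; have /andP[xj_gt0 _] := x_range jS.
have : q k != q j by apply: contra neq_kj => /eqP/(q_inj kS jS) ->.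
by rewrite neq_lt => /orP[/(doubling kS jS) | /(doubling jS kS)]; lia.
Qed.

Lemma chain_x_lt_q_lt : {in S &, forall k j, x k < x j -> (q k < q j)%O}%N.
Proof.
move=> k j kS jS lt_xkj.
have neq_kj : k != j by apply: contraTneq lt_xkj => ->; rewrite ltnn.
have : q k != q j by apply: contra neq_kj => /eqP/(q_inj kS jS) ->.
rewrite neq_lt => /orP[// | /(doubling jS kS)].
by have /andP[xk_gt0 _] := x_range kS; lia.
Qed.

Lemma chain_sorted_x_lt : sorted (fun k j => x k < x j)%N ks.
Proof.
suff : sorted ltn [seq x k | k <- ks] by rewrite sorted_map.
rewrite ltn_sorted_uniq_leq sorted_map map_inj_in_uniq ?sort_uniq ?enum_uniq;
  last first.
  by move=> k j /(allP ks_in_S) kS /(allP ks_in_S) jS; exact: chain_x_inj.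
by apply: sort_sorted => k j; exact: leq_total.
Qed.

Lemma chain_sorted_deadlines : sorted <=%O [seq q k | k <- ks].
Proof.
rewrite sorted_map; apply: sub_in_sorted ks_in_S chain_sorted_x_lt.
by move=> k j kS jS /(chain_x_lt_q_lt kS jS) /ltW.
Qed.

Lemma chain_sorted_doubling :
  sorted (fun v w => 2 * v <= w)%N [seq x k | k <- ks].
Proof.
rewrite sorted_map; apply: sub_in_sorted ks_in_S chain_sorted_x_lt.
by move=> k j kS jS /(chain_x_lt_q_lt kS jS); exact: doubling.
Qed.

Lemma chain_size : (size ks <= trunc_log 2 n + 1)%N.
Proof.
rewrite -(size_map x); apply: doubling_chain_size chain_sorted_doubling _.
by apply/allP => _ /mapP[k /(allP ks_in_S) kS ->]; exact: x_range.
Qed.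

End DoublingChain.

Section Execution.
Variables (R : realFieldType) (n m : nat) (e : 'I_m -> 'I_n) (a q : 'I_m -> R).
Variable L0 : seq 'I_n.

Local Notation step := (step e a q).
Local Notation run_upto := (run_upto e a q L0).
Local Notation state_before := (state_before e a q L0).
Local Notation deadlines := (deadlines q).

Definition valid_list (L : seq 'I_n) : Prop := perm_eq L (enum 'I_n).

Lemma valid_pos_le (L : seq 'I_n) y : valid_list L -> (pos y L <= n)%N.
Proof.
move=> vL; have : y \in L by rewrite (perm_mem vL) mem_enum.
by rewrite -index_mem (perm_size vL) size_enum_ord.
Qed.

Lemma step_valid (st : state n m) tau : valid_list st.1 -> valid_list (step st tau).1.
Proof.
rewrite /Defs.step; case: trig_elt => [y|] //= vL.
have yL : y \in st.1 by rewrite (perm_mem vL) mem_enum.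
by apply: perm_trans vL; rewrite perm_sym; exact: perm_to_rem.
Qed.

Lemma step_served_mono (st : state n m) tau : st.2 \subset (step st tau).2.
Proof. by rewrite /Defs.step; case: trig_elt => [y|] //=; exact: subsetUl. Qed.

Lemma foldl_served_mono (st : state n m) (s : seq R) :
  st.2 \subset (foldl step st s).2.
Proof.
elim: s st => //= tau s IH st.
exact: subset_trans (step_served_mono st tau) (IH _).
Qed.

Lemma foldl_valid (st : state n m) (s : seq R) :
  valid_list st.1 -> valid_list (foldl step st s).1.
Proof. by elim: s st => //= tau s IH st /(@step_valid st tau) /IH. Qed.

Lemma run_valid p : valid_list L0 -> valid_list (run_upto p).1.
Proof. exact: (@foldl_valid (L0, set0)). Qed.

Definition down_closed (p : pred R) : Prop := forall s s', p s' -> s <= s' -> p s.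

Lemma le_down_closed tau : down_closed (fun s => s <= tau).
Proof. by move=> s s' le_s't le_ss'; exact: le_trans le_ss' le_s't. Qed.

Lemma lt_down_closed tau : down_closed (fun s => s < tau).
Proof. by move=> s s' lt_s't le_ss'; exact: le_lt_trans le_ss' lt_s't. Qed.

Lemma deadlines_sorted : sorted <=%R deadlines.
Proof. exact: (sort_sorted le_total). Qed.

Lemma deadlines_uniq : uniq deadlines.
Proof. by rewrite /Defs.deadlines sort_uniq undup_uniq. Qed.

Lemma run_split (p1 p2 : pred R) : (forall s, p1 s -> p2 s) -> down_closed p1 ->
  run_upto p2 = foldl step (run_upto p1) [seq s <- deadlines | p2 s && ~~ p1 s].
Proof.
move=> p12 p1_down; rewrite /Defs.run_upto.
by rewrite (filter_prefix_split deadlines_sorted p12 p1_down) foldl_cat.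
Qed.

Lemma run_served_mono (p1 p2 : pred R) : (forall s, p1 s -> p2 s) -> down_closed p1 ->
  (run_upto p1).2 \subset (run_upto p2).2.
Proof.
by move=> p12 p1_down; rewrite (run_split p12 p1_down); exact: foldl_served_mono.
Qed.

Lemma run_through_deadline tau : tau \in deadlines ->
  run_upto (fun s => s <= tau) = step (state_before tau) tau.
Proof.
move=> tau_dl; have lt_le s : s < tau -> s <= tau by exact: ltW.
rewrite (run_split lt_le (@lt_down_closed tau)).
have -> : [seq s <- deadlines | (s <= tau) && ~~ (s < tau)] =
          [seq s <- deadlines | pred1 tau s].
  by apply: eq_filter => s /=; case: (ltgtP s tau).
by rewrite filter_pred1_uniq ?deadlines_uniq.
Qed.

Lemma cands_spec (st : state n m) tau k : k \in cands e a q st tau ->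
  [/\ trig_elt e a q st tau = Some (e k), k \in pending a st tau & q k = tau].
Proof.
rewrite /cands; case: trig_elt => [y|]; last by rewrite inE.
by rewrite !inE => /andP[/andP[kp /eqP ->] /eqP ->].
Qed.

Lemma step_serves (st : state n m) tau y k : trig_elt e a q st tau = Some y ->
  k \in pending a st tau -> (pos (e k) st.1 <= minn (2 * pos y st.1 - 1) n)%N ->
  k \in (step st tau).2.
Proof. by rewrite /Defs.step => -> kp win /=; rewrite in_setU inE kp win orbT. Qed.

(* A request that has arrived by [t0] and survives an event at a time
   [tau >= t0] lies behind the triggering element, so move-to-front does not
   change its position. *)
Lemma step_keeps_pos (st : state n m) tau k t0 : valid_list st.1 ->
  t0 <= tau -> a k <= t0 -> k \notin (step st tau).2 ->
  pos (e k) (step st tau).1 = pos (e k) st.1.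
Proof.
move=> vL t0_tau ak_t0; rewrite /Defs.step; case trig: trig_elt => [y|] //=.
rewrite in_setU inE negb_or => /andP[k_unserved /nandP[]].
  by rewrite inE (le_trans ak_t0 t0_tau) k_unserved.
move=> outside; rewrite /pos index_move_to_front //.
- by rewrite (perm_uniq vL) enum_uniq.
- by rewrite (perm_mem vL) mem_enum.
have := outside_window (valid_pos_le (e k) vL) outside; rewrite /pos; lia.
Qed.

Lemma foldl_keeps_pos (st : state n m) (s : seq R) k t0 : valid_list st.1 ->
  all (fun tau => t0 <= tau) s -> a k <= t0 -> k \notin (foldl step st s).2 ->
  pos (e k) (foldl step st s).1 = pos (e k) st.1.
Proof.
elim: s st => //= tau s IH st vL /andP[t0_tau t0_s] ak_t0 unserved.
rewrite IH //; last exact: step_valid.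
apply: step_keeps_pos vL t0_tau ak_t0 _.
by apply: contra unserved; apply/subsetP; exact: foldl_served_mono.
Qed.

End Execution.

Section AllTriggering.
Variables (R : realFieldType) (n m : nat) (e : 'I_m -> 'I_n) (a q : 'I_m -> R).
Variables (L0 : seq 'I_n) (c : R -> option 'I_m).
Hypothesis L0_valid : valid_list L0.
Hypothesis c_valid : valid_choice e a q L0 c.
Hypothesis all_triggering : forall k, is_triggering e a q L0 c k.

Local Notation run_upto := (run_upto e a q L0).
Local Notation state_before := (state_before e a q L0).

Lemma triggers_at_deadline k : [/\ q k \in deadlines q,
  k \in cands e a q (state_before (q k)) (q k) & c (q k) = Some k].
Proof.
have [tau [tau_dl nonempty c_tau]] := all_triggering k.
have [k' + k'_cand] := c_valid tau_dl nonempty.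
rewrite c_tau => -[eq_kk']; rewrite -eq_kk' in k'_cand.
by have [_ _ qk] := cands_spec k'_cand; rewrite qk.
Qed.

Lemma deadline_inj : injective q.
Proof.
move=> k j qkj; have [_ _ ck] := triggers_at_deadline k.
by have [_ _] := triggers_at_deadline j; rewrite -qkj ck => -[].
Qed.

Lemma pending_before_deadline k : k \in pending a (state_before (q k)) (q k).
Proof. by have [_ /cands_spec[]] := triggers_at_deadline k. Qed.

Lemma served_by_deadline k : k \in (run_upto (fun s => s <= q k)).2.
Proof.
have [q_dl k_cand _] := triggers_at_deadline k.
have [trig _ _] := cands_spec k_cand.
rewrite run_through_deadline //; apply: step_serves trig (pending_before_deadline k) _.
rewrite leq_min valid_pos_le ?andbT; last exact: run_valid.
by rewrite /pos; lia.
Qed.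

Variables (after : bool) (t : R).
Definition processed (s : R) : bool := (s < t) || (after && (s == t)).

Lemma processed_down_closed : down_closed processed.
Proof.
move=> s s'; rewrite /processed => /orP[lt_s't | /andP[-> /eqP ->]] le_ss'.
  by rewrite (le_lt_trans le_ss' lt_s't).
by rewrite le_eqVlt in le_ss'; case/orP: le_ss' => [-> | ->]; rewrite ?orbT.
Qed.

Local Notation now := (run_upto processed).

Lemma pending_unprocessed k : k \in pending a now t -> ~~ processed (q k).
Proof.
move=> k_pending; apply/negP => processed_qk.
have served_now : (run_upto (fun s => s <= q k)).2 \subset now.2.
  apply: (run_served_mono e a q L0 _ (le_down_closed (tau := q k))) => s.
  exact: processed_down_closed.
move: k_pending; rewrite inE => /andP[_ /negP]; apply.
exact: subsetP served_now _ (served_by_deadline k).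
Qed.

(* Until an unprocessed time [tau], ALG only acts at times [>= t]; so a
   request pending at [t] and still unserved before [tau] keeps the position
   it had at [t]. *)
Lemma position_frozen tau k : ~~ processed tau -> k \in pending a now t ->
  k \notin (state_before tau).2 -> pos (e k) (state_before tau).1 = pos (e k) now.1.
Proof.
move=> tau_unprocessed k_pending k_unserved.
have processed_lt s : processed s -> s < tau.
  move=> ps; rewrite ltNge; apply: contra tau_unprocessed.
  exact: processed_down_closed.
have split_before := run_split e a q L0 processed_lt processed_down_closed.
rewrite /Defs.state_before split_before in k_unserved *.
apply: (foldl_keeps_pos (t0 := t)) _ _ k_unserved.
- exact: run_valid.
- apply/allP => s; rewrite mem_filter => /andP[/andP[_ s_unprocessed] _].
  by rewrite leNgt; apply: contra s_unprocessed => lt_st; rewrite /processed lt_st.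
- by move: k_pending; rewrite inE => /andP[].
Qed.

(* Key property: of two requests pending at [t], the one with the earlier
   deadline [q k] triggers an event before the other is served; the other one
   then lies outside the access window of that event, i.e. at a position at
   least twice that of [e k]. *)
Lemma pending_doubling k j : k \in pending a now t -> j \in pending a now t ->
  q k < q j -> (2 * pos (e k) now.1 <= pos (e j) now.1)%N.
Proof.
move=> k_pending j_pending lt_qkj.
have qk_unprocessed := pending_unprocessed k_pending.
have t_le_qk : t <= q k.
  by rewrite leNgt; apply: contra qk_unprocessed => lt_qkt; rewrite /processed lt_qkt.
have [qk_dl k_cand _] := triggers_at_deadline k.
have [trig k_pending_qk _] := cands_spec k_cand.
have j_unserved_qk : j \notin (step e a q (state_before (q k)) (q k)).2.
  rewrite -run_through_deadline //; apply: contraL (pending_before_deadline j).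
  have served_mono : (run_upto (fun s => s <= q k)).2 \subset (state_before (q j)).2.
    apply: (run_served_mono e a q L0 _ (le_down_closed (tau := q k))) => s le_sqk.
    exact: le_lt_trans le_sqk lt_qkj.
  by move=> /(subsetP served_mono) j_served; rewrite inE j_served andbF.
have j_unserved : j \notin (state_before (q k)).2.
  by apply: contra j_unserved_qk; apply/subsetP; exact: step_served_mono.
have k_unserved : k \notin (state_before (q k)).2.
  by move: k_pending_qk; rewrite inE => /andP[].
rewrite -(position_frozen qk_unprocessed k_pending k_unserved).
rewrite -(position_frozen qk_unprocessed j_pending j_unserved).
apply: outside_window; first exact/valid_pos_le/run_valid.
apply: contra j_unserved_qk; apply: step_serves trig _.
move: j_pending; rewrite !inE => /andP[aj_le_t _].
by rewrite (le_trans aj_le_t t_le_qk) j_unserved.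
Qed.

End AllTriggering.

(* The main theorem: the pending requests at time [t] form a doubling chain. *)
Theorem mainTheorem6 (R : realFieldType) (n m : nat)
    (e : 'I_m -> 'I_n) (a q : 'I_m -> R) (L0 : seq 'I_n)
    (c : R -> option 'I_m) (after : bool) (t : R) :
  (forall k, a k <= q k) ->
  perm_eq L0 (enum 'I_n) ->
  valid_choice e a q L0 c ->
  (forall k, is_triggering e a q L0 c k) ->
  let st := state_at e a q L0 after t in
  let Rs := pending_at e a q L0 after t in
  let x := fun k : 'I_m => pos (e k) st.1 in
  let ks := sort (fun k j => (x k <= x j)%N) (enum Rs) in
  let d := size ks in
  let xs := [seq x k | k <- ks] in
  let qs := [seq q k | k <- ks] in
  [/\ {in Rs &, injective x},
      (forall l, (l.+1 < d)%N -> nth 0 qs l <= nth 0 qs l.+1),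
      (forall l, (l.+1 < d)%N -> (2 * nth 0%N xs l <= nth 0%N xs l.+1)%N)
    & (d <= trunc_log 2 n + 1)%N].
Proof.
move=> _ L0_valid c_valid all_trig st Rs x ks d xs qs.
have q_inj : {in Rs &, injective q} := in2W (deadline_inj c_valid all_trig).
have x_range : {in Rs, forall k, 0 < x k <= n}%N.
  by move=> k _; rewrite /x valid_pos_le //; exact: run_valid.
have doubling : {in Rs &, forall k j, q k < q j -> (2 * x k <= x j)%N}.
  exact: (pending_doubling L0_valid c_valid all_trig (after := after) (t := t)).
split.
- exact: chain_x_inj q_inj x_range doubling.
- rewrite /d -(size_map q); apply/(sortedP 0).
  exact: chain_sorted_deadlines q_inj x_range doubling.
- rewrite /d -(size_map x); apply/(@sortedP _ (fun v w => 2 * v <= w)%N _ 0%N).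
  exact: chain_sorted_doubling q_inj x_range doubling.
- exact: chain_size q_inj x_range doubling.
Qed.
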